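(* Let $n\ge 2$, $t\ge 2$. Every $\mathbb{F}_q$-linear set $L$ of $\Lambda=PG(V,\mathbb{F}_{q^t})=PG(2n-1,q^t)$ of pseudoregulus type is of the form $L_{\rho,f}$; that is, there exist a decomposition $V=U_1\oplus U_2$ with $\dim U_1=\dim U_2=n$, an invertible semilinear map $f:U_1\to U_2$ whose companion automorphism $\sigma$ satisfies $\mathrm{Fix}(\sigma)=\mathbb{F}_q$, and $\rho\in\mathbb{F}_{q^t}^*$, such that $L=\{\langle\mathbf u+\rho f(\mathbf u)\rangle_{q^t}:\mathbf u\in U_1\setminus\{\mathbf 0\}\}$.
   Context: For an $\mathbb{F}_q$-subspace $U$ of $V$, $L_U=\{\langle\mathbf u\rangle_{q^t}:\mathbf u\in U\setminus\{\mathbf 0\}\}$ is the $\mathbb{F}_q$-linear set defined by $U$, of rank $\dim_{\mathbb F_q}U$; the weight of a subspace $PG(W,\mathbb{F}_{q^t})$ in $L_U$ is $\dim_{\mathbb F_q}(W\cap U)$; $L_U$ is scattered if every point has weight 1. A semilinear map $f$ with companion automorphism $\sigma$ is additive with $f(\lambda\mathbf u)=\lambda^\sigma f(\mathbf u)$. Pseudoregulus type: for $t,n\ge 2$, a scattered $\mathbb{F}_q$-linear set $L=L_U$ of $PG(2n-1,q^t)$ of rank $tn$ is of pseudoregulus type if (i) there exist $(q^{nt}-1)/(q^t-1)$ pairwise disjoint lines $s_i$ each of weight $t$ in $L$, and (ii) there exist exactly two $(n-1)$-dimensional subspaces $T_1,T_2$ disjoint from $L$ with $T_j\cap s_i\ne\emptyset$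 for all $i,j$. *)

From HB Require Import structures.
From mathcomp Require Import all_boot all_order all_algebra.
Set Implicit Arguments. Unset Strict Implicit. Unset Printing Implicit Defensive.
Import GRing.Theory.
Local Open Scope ring_scope.

(* Conventions:
   - K : finFieldType plays the role of F_{q^t};
   - Fq : {pred K} is a subfield of K playing the role of F_q;
   - V = 'rV[K]_m (here m = 2n);
   - F_q-subspaces of V are finite sets U : {set 'rV[K]_m};
   - F_{q^t}-subspaces W of V are represented by matrices (their row spaces,
     mxalgebra), projective dimension = \rank W - 1;
   - a projective point <v>_{q^t} is represented canonically by <<v>>%MS. *)

Section LinearSets.
Variables (K : finFieldType) (Fq : {pred K}) (m : nat).

Definition is_subfield : Prop :=
  [/\ 0 \in Fq, 1 \in Fq,
      (forall x y, x \in Fq -> y \in Fq -> x - y \in Fq),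
      (forall x y, x \in Fq -> y \in Fq -> x * y \in Fq) &
      (forall x, x \in Fq -> x^-1 \in Fq)].

Definition Fsubspace (U : {set 'rV[K]_m}) : Prop :=
  0 \in U /\
  forall (a : K) (u w : 'rV[K]_m), a \in Fq -> u \in U -> w \in U ->
    a *: u + w \in U.

Definition has_Fdim (U : {set 'rV[K]_m}) (d : nat) : Prop :=
  exists vs : 'I_d -> 'rV[K]_m,
    (forall a : 'I_d -> K, (forall i, a i \in Fq) ->
        \sum_i a i *: vs i = 0 -> forall i, a i = 0) /\
    (forall u, u \in U <->
        exists a : 'I_d -> K, (forall i, a i \in Fq) /\ u = \sum_i a i *: vs i).

Definition linset (U : {set 'rV[K]_m}) : {set 'M[K]_m} :=
  [set <<u>>%MS | u in U :\ 0].

(* W \cap U, whose F_q-dimension is the weight of PG(W) in L_U *)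
Definition meetU (U : {set 'rV[K]_m}) (W : 'M[K]_m) : {set 'rV[K]_m} :=
  [set u in U | (u <= W)%MS].

Definition weight_is (U : {set 'rV[K]_m}) (W : 'M[K]_m) (k : nat) : Prop :=
  has_Fdim (meetU U W) k.

Definition scattered (U : {set 'rV[K]_m}) : Prop :=
  forall u, u \in U -> u != 0 -> weight_is U <<u>>%MS 1.

Definition disjoint_from_linset (U : {set 'rV[K]_m}) (W : 'M[K]_m) : Prop :=
  forall u, u \in U -> u != 0 -> ~~ (u <= W)%MS.

End LinearSets.

Definition good_T (K : finFieldType) (Fq : {pred K}) (n : nat)
  (U : {set 'rV[K]_(n + n)}) (S : {set 'M[K]_(n + n)}) (T : 'M[K]_(n + n)) : Prop :=
  [/\ \rank T = n, disjoint_from_linset U T &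
      forall s, s \in S -> (T :&: s != (0 : 'M[K]_(n + n)))%MS].

Definition pseudoregulus_type (K : finFieldType) (Fq : {pred K}) (n t : nat)
  (U : {set 'rV[K]_(n + n)}) : Prop :=
  [/\ (2 <= t)%N && (2 <= n)%N,
      Fsubspace Fq U, has_Fdim Fq U (t * n), scattered Fq U &
      exists S : {set 'M[K]_(n + n)},
        [/\ #|S| = ((#|Fq| ^ (n * t) - 1) %/ (#|Fq| ^ t - 1))%N,
            (* the s_i are lines, distinct as subspaces, of weight t *)
            (forall s, s \in S -> <<s>>%MS = s /\ \rank s = 2%N),
            (forall s, s \in S -> weight_is Fq U s t),
            (forall s s', s \in S -> s' \in S -> s != s' -> (s :&: s' == (0 : 'M[K]_(n + n)))%MS) &
            exists T1 T2 : 'M[K]_(n + n),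
              [/\ good_T Fq U S T1, good_T Fq U S T2, ~~ (T1 == T2)%MS &
                  forall T, good_T Fq U S T -> (T == T1)%MS \/ (T == T2)%MS]]].
Arguments pseudoregulus_type : clear implicits.

From HB Require Import structures.
From mathcomp Require Import all_boot all_order all_algebra zify.
Import GRing.Theory.
Local Open Scope ring_scope.
Set Implicit Arguments. Unset Strict Implicit. Unset Printing Implicit Defensive.

(* Let S be the (q^{nt}-1)/(q^t-1) lines of weight t and T1, T2 the two
   transversal subspaces of rank n disjoint from L_U.  Counting vectors
   (Q = q^t = #|K|) shows that the lines of S partition U \ 0, and that each
   T_i meets each line in one point, these points partitioning T_i \ 0.
   A further count inside T1 + T2 shows T1 :&: T2 = 0, so V = T1 (+) T2.
   As U meets T1 and T2 trivially and #|U| = Q^n, the projections of U onto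
   T1 and T2 are bijections, hence U is the graph {x + g x | x in T1} of an
   F_q-linear bijection g : T1 -> T2.  Since each line of S is spanned by
   its points on T1 and T2, g maps points of PG(T1) to points of PG(T2);
   a standard argument shows that the scalar factor does not depend on the
   point, which yields a field automorphism sigma with g semilinear.
   Finally Fix(sigma) = F_q because U is scattered. *)

Lemma card_bigcup_disjoint (I T : finType) (J : {set I}) (B : I -> {set T}) :
  {in J &, forall i j, j != i -> [disjoint B i & B j]} ->
  (forall i, i \in J -> B i != set0) ->
  #|\bigcup_(i in J) B i| = (\sum_(i in J) #|B i|)%N.
Proof.
move=> disjB neB; have [/and3P[_ /eqP trivB _] injB] := indexed_partition disjB neB.
by rewrite -cover_imset -trivB big_imset.
Qed.

Section DisjointFamily.
Variables (I T : finType) (J : {set I}) (A : I -> {set T}) (B : {set T}) (k : nat).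
Hypotheses (subA : forall i, i \in J -> A i \subset B)
  (disjA : {in J &, forall i j, j != i -> [disjoint A i & A j]})
  (cardA : forall i, i \in J -> #|A i| = k) (k_gt0 : (0 < k)%N).

Lemma card_bigcup_family : #|\bigcup_(i in J) A i| = (#|J| * k)%N.
Proof.
rewrite card_bigcup_disjoint // => [|i iJ]; first by rewrite (eq_bigr _ cardA) sum_nat_const.
by rewrite -card_gt0 cardA.
Qed.

Lemma family_card_le : (#|J| * k <= #|B|)%N.
Proof. by rewrite -card_bigcup_family subset_leq_card //; apply/bigcupsP. Qed.

Lemma family_covers : (#|B| <= #|J| * k)%N -> forall x, x \in B -> exists2 i, i \in J & x \in A i.
Proof.
move=> cardB x; have <- : \bigcup_(i in J) A i = B.
  by apply/eqP; rewrite eqEcard card_bigcup_family cardB andbT; apply/bigcupsP.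
by move/bigcupP.
Qed.
End DisjointFamily.

Lemma card_rowspace (K : finFieldType) m (A : 'M[K]_m) :
  #|[set v : 'rV[K]_m | (v <= A)%MS]| = (#|K| ^ \rank A)%N.
Proof.
have -> : [set v : 'rV[K]_m | (v <= A)%MS] =
          [set x *m row_base A | x in [set: 'rV[K]_(\rank A)]].
  apply/setP=> v; rewrite inE; apply/idP/imsetP => [|[x _ ->]].
    by rewrite -(eq_row_base A) => /submxP [x ->]; exists x; rewrite ?inE.
  by rewrite -(eq_row_base A) submxMl.
rewrite card_in_imset ?cardsT ?card_mx ?mul1n // => x y _ _.
exact: (row_free_inj (row_base_free A)).
Qed.

Lemma card_has_Fdim (K : finFieldType) (Fq : {pred K}) m (X : {set 'rV[K]_m}) d :
  is_subfield Fq -> has_Fdim Fq X d -> #|X| = (#|Fq| ^ d)%N.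
Proof.
move=> [_ _ FqB _ _] [vs [vs_free vs_span]].
have -> : X = [set \sum_i (a : {ffun 'I_d -> K}) i *: vs i | a in ffun_on Fq].
  apply/setP=> u; apply/idP/imsetP => [/vs_span [a [aF ->]]|[a /ffun_onP aF ->]].
    exists (finfun a); first by apply/ffun_onP=> i; rewrite ffunE.
    by apply: eq_bigr=> i _; rewrite ffunE.
  by apply/vs_span; exists a.
rewrite card_in_imset ?card_ffun_on ?card_ord // => a b /ffun_onP aF /ffun_onP bF eq_ab.
apply/ffunP=> i; apply/eqP; rewrite -subr_eq0; apply/eqP.
apply: (vs_free (fun i => a i - b i)) => [j|]; first exact: FqB.
by rewrite (eq_bigr _ (fun j _ => scalerBl _ _ _)) sumrB eq_ab subrr.
Qed.

(* If distinct elements of X never differ by a vector of T, then the sums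
   X + T are all distinct, whence |X| |T| <= |M| for X, T inside M. *)
Lemma card_direct_sum_le (K : finFieldType) m (X : {set 'rV[K]_m}) (T M : 'M[K]_m) :
  {in X &, forall a b, (a - b <= T)%MS -> a = b} ->
  (forall a, a \in X -> (a <= M)%MS) -> (T <= M)%MS ->
  (#|X| * #|K| ^ \rank T <= #|K| ^ \rank M)%N.
Proof.
move=> X_T XM TM; rewrite -!card_rowspace -cardsX.
rewrite -(@card_in_imset _ _ (fun p => p.1 + p.2)).
  apply: subset_leq_card; apply/subsetP=> v /imsetP[[a b]].
  rewrite !inE /= => /andP[aX bT] ->.
  exact: addmx_sub (XM _ aX) (submx_trans bT TM).
move=> [a b] [a' b']; rewrite !inE /= => /andP[aX bT] /andP[a'X b'T] eq_sum.
have eq_a : a = a'.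
  apply: X_T => //; have -> : a - a' = b' - b.
    by apply/eqP; rewrite subr_eq addrC addrA -eq_sum addrK.
  by rewrite addmx_sub ?eqmx_opp.
by move: eq_sum; rewrite eq_a => /addrI ->.
Qed.

Lemma inj_card_onto (T : finType) (X B : {set T}) (f : T -> T) :
  {in X &, injective f} -> (forall u, u \in X -> f u \in B) -> (#|B| <= #|X|)%N ->
  forall y, y \in B -> exists2 u, u \in X & f u = y.
Proof.
move=> f_inj fB cardB y; have <- : f @: X = B.
  apply/eqP; rewrite eqEcard card_in_imset // cardB andbT.
  by apply/subsetP=> _ /imsetP[u uX ->]; apply: fB.
by case/imsetP=> u uX ->; exists u.
Qed.

Lemma exists_nonzero (K : finFieldType) m (X : {set 'rV[K]_m}) :
  (1 < #|X|)%N -> exists2 u, u \in X & u != 0.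
Proof.
move=> cardX; apply/exists_inP; apply: contraTT cardX => /exists_inPn X0.
have : X \subset [set 0] by apply/subsetP=> u uX; rewrite inE; apply/negPn/X0.
by move/subset_leq_card; rewrite cards1 ltnNge => ->.
Qed.

Lemma rank1_multiple (K : fieldType) m (A : 'M[K]_m) (y z : 'rV[K]_m) :
  \rank A = 1%N -> (y <= A)%MS -> y != 0 -> (z <= A)%MS -> exists c, z = c *: y.
Proof.
move=> rA yA y_nz zA; apply/sub_rVP; apply: submx_trans zA _.
by rewrite -(mxrank_leqif_sup yA) rA rank_rV y_nz.
Qed.

Lemma rank2_spanned (K : fieldType) m (s : 'M[K]_m) (v w : 'rV[K]_m) :
  \rank s = 2%N -> (v <= s)%MS -> (w <= s)%MS -> w != 0 -> ~~ (v <= w)%MS ->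
  (s <= v + w)%MS.
Proof.
move=> rs vs ws w_nz v_w; have v_nz : v != 0 by apply: contraNneq v_w => ->; rewrite sub0mx.
have vw0 : \rank (v :&: w)%MS = 0%N.
  apply/eqP; apply: contraNT v_w; rewrite -lt0n => rvw.
  have : (v <= v :&: w)%MS.
    by rewrite -(mxrank_leqif_sup (capmxSl v w)) eqn_leq (mxrankS (capmxSl v w)) rank_rV v_nz.
  by move/submx_trans; apply; apply: capmxSr.
have := mxrank_sum_cap v w; rewrite vw0 !rank_rV v_nz w_nz addn0 => r2.
have vw_s : (v + w <= s)%MS by rewrite addsmx_sub vs ws.
by rewrite -(mxrank_leqif_sup vw_s) rs r2.
Qed.

Section RingMorphismOfFunction.
Variables (R : pzRingType) (f : R -> R).
Hypotheses (fD : {morph f : x y / x + y}) (fM : {morph f : x y / x * y}) (f1 : f 1 = 1).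

Definition rmorph_fun : R -> R := f.

Lemma rmorph_fun_nmod : nmod_morphism rmorph_fun.
Proof. by split=> //; apply: (addrI (f 0)); rewrite -fD !addr0. Qed.

HB.instance Definition _ := GRing.isNmodMorphism.Build R R rmorph_fun rmorph_fun_nmod.
HB.instance Definition _ := GRing.isMonoidMorphism.Build R R rmorph_fun (conj f1 fM).

Definition rmorph_of : {rmorphism R -> R} := rmorph_fun.
End RingMorphismOfFunction.

Section PseudoregulusType.
(* The components of [pseudoregulus_type K Fq n t U]; T1 and T2 are two
   distinct good subspaces. *)
Variables (K : finFieldType) (Fq : {pred K}) (n t : nat).
Hypotheses (Fq_subfield : is_subfield Fq) (n_ge2 : (2 <= n)%N)
  (card_K : #|K| = (#|Fq| ^ t)%N).
Variable U : {set 'rV[K]_(n + n)}.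
Hypotheses (U_subspace : Fsubspace Fq U) (U_dim : has_Fdim Fq U (t * n))
  (U_scattered : scattered Fq U).
Variable S : {set 'M[K]_(n + n)}.
Hypotheses (card_S : #|S| = ((#|Fq| ^ (n * t) - 1) %/ (#|Fq| ^ t - 1))%N)
  (S_lines : forall s, s \in S -> <<s>>%MS = s /\ \rank s = 2%N)
  (S_weight : forall s, s \in S -> weight_is Fq U s t)
  (S_disjoint : forall s s', s \in S -> s' \in S -> s != s' ->
     (s :&: s' == (0 : 'M[K]_(n + n)))%MS).
Variables T1 T2 : 'M[K]_(n + n).
Hypotheses (T1_good : good_T Fq U S T1) (T2_good : good_T Fq U S T2)
  (T1_neq_T2 : ~~ (T1 == T2)%MS).

Local Notation m := (n + n).
Local Notation Q := #|K|.
Local Notation vecs A := [set v : 'rV[K]_m | (v <= A)%MS].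

Lemma Q_ge2 : (2 <= Q)%N.
Proof.
have := subset_leq_card (subsetT [set (0 : K); 1]).
by rewrite cards2 eq_sym oner_neq0 cardsT.
Qed.

Lemma card_U : #|U| = (Q ^ n)%N.
Proof. by rewrite (card_has_Fdim Fq_subfield U_dim) card_K expnM. Qed.

Lemma card_U_line s : s \in S -> #|meetU U s| = Q.
Proof. by move=> sS; rewrite (card_has_Fdim Fq_subfield (S_weight sS)) card_K. Qed.

Lemma card_S_mul : (#|S| * (Q - 1))%N = (Q ^ n - 1)%N.
Proof.
rewrite card_S card_K [(n * t)%N]mulnC expnM divnK // !subn1.
by rewrite [X in (_ %| X)%N]predn_exp dvdn_mulr.
Qed.

Lemma Fq_opp1 : -1 \in Fq.
Proof. by case: Fq_subfield => F0 F1 FB _ _; rewrite -sub0r FB. Qed.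

Lemma U0 : 0 \in U. Proof. by case: U_subspace. Qed.

Lemma UZD a u w : a \in Fq -> u \in U -> w \in U -> a *: u + w \in U.
Proof. by case: U_subspace => _; apply. Qed.

Lemma UB u w : u \in U -> w \in U -> u - w \in U.
Proof. by move=> uU wU; rewrite addrC -scaleN1r UZD ?Fq_opp1. Qed.

Lemma UD u w : u \in U -> w \in U -> u + w \in U.
Proof. by move=> uU wU; rewrite -[u]scale1r UZD //; case: Fq_subfield. Qed.

Lemma UZ a u : a \in Fq -> u \in U -> a *: u \in U.
Proof. by move=> aF uU; rewrite -[_ *: _]addr0 UZD ?U0. Qed.

Lemma lines_meet_trivially s s' (v : 'rV[K]_m) : s \in S -> s' \in S -> s != s' ->
  (v <= s)%MS -> (v <= s')%MS -> v = 0.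
Proof.
move=> sS s'S ss' vs vs'; have /andP[cap0 _] := S_disjoint sS s'S ss'.
by apply/eqP; rewrite -submx0 (submx_trans _ cap0) // sub_capmx vs vs'.
Qed.

Lemma disjoint_on_lines (A : 'M[K]_m -> {set 'rV[K]_m}) :
  (forall s v, v \in A s -> (v <= s)%MS) ->
  {in S &, forall s s', s' != s -> [disjoint A s :\ 0 & A s' :\ 0]}.
Proof.
move=> A_sub s s' sS s'S s's; rewrite -setI_eq0; apply/eqP/setP=> v.
rewrite !inE; apply/negbTE/negP=> /andP[/andP[v_nz vA] /andP[_ vA']].
by move/eqP: v_nz; apply; apply: (lines_meet_trivially s'S sS s's); apply: A_sub.
Qed.

Lemma card_nonzero (X : {set 'rV[K]_m}) : 0 \in X -> #|X :\ 0| = (#|X| - 1)%N.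
Proof. by move=> X0; rewrite (cardsD1 0 X) X0 add1n subn1. Qed.

Lemma point_on_line s T : good_T Fq U S T -> s \in S -> \rank (s :&: T) = 1%N.
Proof.
move=> [rT T_disj T_meet] sS; have [_ rs] := S_lines sS.
have pos : (0 < \rank (s :&: T))%N.
  by rewrite lt0n mxrank_eq0; apply: contraNneq (T_meet s sS) => h; rewrite capmxC h.
have le2 : (\rank (s :&: T) <= 2)%N by rewrite -rs mxrankS ?capmxSl.
have [//|r_ne1] := eqVneq (\rank (s :&: T)) 1%N.
have rank2 : \rank (s :&: T) = 2%N by lia.
have sT : (s <= T)%MS.
  apply: submx_trans (capmxSr s T).
  by rewrite -(mxrank_leqif_sup (capmxSl s T)) rank2 rs.
have [u] : exists2 u, u \in meetU U s & u != 0.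
  by apply: exists_nonzero; rewrite card_U_line ?Q_ge2.
by rewrite inE => /andP[uU us] u_nz; have := T_disj u uU u_nz; rewrite (submx_trans us sT).
Qed.

Lemma card_point s T : good_T Fq U S T -> s \in S -> #|vecs (s :&: T)| = Q.
Proof. by move=> T_good sS; rewrite card_rowspace (point_on_line T_good sS) expn1. Qed.

Lemma nonzero_on_point s T : good_T Fq U S T -> s \in S ->
  exists2 w : 'rV[K]_m, (w <= s :&: T)%MS & w != 0.
Proof.
move=> T_good sS; have [|w] := @exists_nonzero _ _ (vecs (s :&: T)).
  by rewrite card_point ?Q_ge2.
by rewrite inE => w_sT w_nz; exists w.
Qed.

Lemma card_point_nonzero s T : good_T Fq U S T -> s \in S -> #|vecs (s :&: T) :\ 0| = (Q - 1)%N.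
Proof. by move=> T_good sS; rewrite card_nonzero ?card_point // inE sub0mx. Qed.

Lemma card_U_line_nonzero s : s \in S -> #|meetU U s :\ 0| = (Q - 1)%N.
Proof. by move=> sS; rewrite card_nonzero ?card_U_line // inE U0 sub0mx. Qed.

(* The lines of S partition the nonzero vectors of U: they carry
   #|S| (Q - 1) = Q^n - 1 = #|U :\ 0| pairwise distinct nonzero vectors of U. *)
Lemma U_covered u : u \in U -> u != 0 -> exists2 s, s \in S & (u <= s)%MS.
Proof.
move=> uU u_nz.
have [] := @family_covers _ _ S (fun s => meetU U s :\ 0) (U :\ 0) (Q - 1) _ _ _ _ _ u.
- by move=> s sS; apply/subsetP=> v; rewrite !inE => /andP[-> /andP[-> _]].
- by apply: disjoint_on_lines => s v; rewrite inE => /andP[].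
- exact: card_U_line_nonzero.
- by rewrite subn_gt0 Q_ge2.
- by rewrite card_nonzero ?U0 // card_U card_S_mul.
- by rewrite !inE u_nz.
by move=> s sS; rewrite !inE => /andP[_ /andP[_ us]]; exists s.
Qed.

Lemma T_covered T (v : 'rV[K]_m) : good_T Fq U S T -> (v <= T)%MS -> v != 0 ->
  exists2 s, s \in S & (v <= s :&: T)%MS.
Proof.
move=> T_good vT v_nz; have [rT _ _] := T_good.
have [] := @family_covers _ _ S (fun s => vecs (s :&: T) :\ 0) (vecs T :\ 0) (Q - 1) _ _ _ _ _ v.
- move=> s sS; apply/subsetP=> x; rewrite !inE => /andP[-> /=].
  by move/submx_trans; apply; apply: capmxSr.
- by apply: disjoint_on_lines => s x; rewrite inE => /submx_trans; apply; apply: capmxSl.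
- by move=> s; apply: card_point_nonzero.
- by rewrite subn_gt0 Q_ge2.
- by rewrite card_nonzero ?card_rowspace ?rT ?card_S_mul // inE sub0mx.
- by rewrite !inE v_nz.
by move=> s sS; rewrite !inE => /andP[_ vs]; exists s.
Qed.

(* A line through a point of T outside a good T' lies in T + T':
   it is spanned by that point and its point on T'. *)
Lemma line_in_sum (T T' s : 'M[K]_m) (v : 'rV[K]_m) : good_T Fq U S T' -> s \in S ->
  (v <= s :&: T)%MS -> ~~ (v <= T')%MS -> (s <= T + T')%MS.
Proof.
move=> T'_good sS vsT vT'; have [_ rs] := S_lines sS.
have [w] := nonzero_on_point T'_good sS; rewrite sub_capmx => /andP[ws wT'] w_nz.
move: vsT; rewrite sub_capmx => /andP[vs vT].
have v_w : ~~ (v <= w)%MS by apply: contra vT' => /submx_trans; apply.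
by apply: submx_trans (rank2_spanned rs vs ws w_nz v_w) _; apply: addsmxS.
Qed.

Section TwoGoodSubspaces.
(* Counting inside M = T1 + T2 shows that T1 and T2 are complementary. *)
Local Notation W := (T1 :&: T2)%MS.
Local Notation M := (T1 + T2)%MS.
Local Notation SM := [set s in S | (s <= M)%MS].
Local Notation UM := [set u in U | (u <= M)%MS].

(* Every vector of T1 outside T2 lies on a line of S contained in M. *)
Lemma count_T1_off_T2 : (#|vecs T1 :\: vecs W| <= #|SM| * (Q - 1))%N.
Proof.
have SM_S : {subset SM <= S} by move=> s; rewrite inE => /andP[].
rewrite -(@card_bigcup_family _ _ SM (fun s => vecs (s :&: T1) :\ 0)).
- apply: subset_leq_card; apply/subsetP=> v; rewrite !inE => /andP[vW vT1].
  have v_nz : v != 0 by apply: contraNneq vW => ->; rewrite sub0mx.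
  have vT2 : ~~ (v <= T2)%MS by apply: contra vW => vT2; rewrite sub_capmx vT1.
  have [s sS vs] := T_covered T1_good vT1 v_nz.
  apply/bigcupP; exists s; last by rewrite !inE v_nz.
  by rewrite inE sS (line_in_sum T2_good sS vs vT2).
- move=> s s' /SM_S sS /SM_S s'S; apply: (disjoint_on_lines (A := fun s => vecs (s :&: T1))) sS s'S.
  by move=> {}s v; rewrite inE => /submx_trans; apply; apply: capmxSl.
- by move=> s /SM_S; apply: card_point_nonzero.
- by rewrite subn_gt0 Q_ge2.
Qed.

(* The lines of S contained in M carry pairwise distinct nonzero vectors of U. *)
Lemma count_U_in_sum : (#|SM| * (Q - 1) < #|UM|)%N.
Proof.
have UM0 : 0 \in UM by rewrite inE U0 sub0mx.
have UM_pos : (0 < #|UM|)%N by apply/card_gt0P; exists 0.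
rewrite -(prednK UM_pos) ltnS -subn1 -card_nonzero //.
apply: (@family_card_le _ _ _ (fun s => meetU U s :\ 0)).
- move=> s; rewrite inE => /andP[_ sM]; apply/subsetP=> x; rewrite !inE.
  by move=> /andP[-> /andP[-> xs]]; rewrite (submx_trans xs sM).
- move=> s s'; rewrite !inE => /andP[sS _] /andP[s'S _].
  apply: (disjoint_on_lines (A := meetU U)) sS s'S.
  by move=> {}s v; rewrite inE => /andP[].
- by move=> s; rewrite inE => /andP[sS _]; apply: card_U_line_nonzero.
- by rewrite subn_gt0 Q_ge2.
Qed.

(* U meets T1 trivially, so the sums (U :&: M) + T1 are distinct vectors of M. *)
Lemma card_U_in_sum : (#|UM| * Q ^ n <= Q ^ \rank M)%N.
Proof.
have [rT1 T1_disj _] := T1_good; rewrite -[X in (_ * _ ^ X)%N]rT1.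
apply: card_direct_sum_le (addsmxSl _ _).
- move=> a b; rewrite !inE => /andP[aU _] /andP[bU _] abT1; apply/eqP; rewrite -subr_eq0.
  by apply: contraTT abT1; apply: T1_disj; apply: UB.
- by move=> a; rewrite inE => /andP[].
Qed.

(* With d = \rank (T1 :&: T2), 0 < d < n, the previous counts give
   Q^n - Q^d < #|U :&: M| <= Q^(n-d), impossible as Q^d, Q^(n-d) >= 2;
   d = n would force T1 = T2. *)
Lemma T1_T2_disjoint : (T1 :&: T2)%MS = 0.
Proof.
have [rT1 _ _] := T1_good; have [rT2 _ _] := T2_good.
apply/eqP; rewrite -mxrank_eq0; set d := \rank W.
have [//|d_pos] := posnP d.
have d_lt : (d < n)%N.
  rewrite ltn_neqAle -{2}rT1 mxrankS ?capmxSl // andbT.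
  apply: contra T1_neq_T2 => /eqP d_n; rewrite -(mxrank_leqif_eq _) ?rT1 ?rT2 //.
  apply: submx_trans (capmxSr T1 T2).
  by rewrite -(mxrank_leqif_sup (capmxSl T1 T2)) -/d d_n rT1.
have rM : \rank M = (n + (n - d))%N.
  by have := mxrank_sum_cap T1 T2; rewrite rT1 rT2 -/d; lia.
have card_off : #|vecs T1 :\: vecs W| = (Q ^ n - Q ^ d)%N.
  rewrite cardsD !card_rowspace rT1 (setIidPr _) ?card_rowspace //.
  by apply/subsetP=> v; rewrite !inE => /submx_trans; apply; apply: capmxSl.
have Qn : (Q ^ n = Q ^ d * Q ^ (n - d))%N by rewrite -expnD subnKC // ltnW.
have UM_le : (#|UM| <= Q ^ (n - d))%N.
  rewrite -(@leq_pmul2r (Q ^ n)) ?expn_gt0 ?(ltnW Q_ge2) //.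
  by rewrite [X in (_ <= X)%N]mulnC -expnD -rM card_U_in_sum.
have UM_ge := leq_ltn_trans count_T1_off_T2 count_U_in_sum.
have pow_ge2 k : (0 < k)%N -> (2 <= Q ^ k)%N.
  by move=> k_pos; rewrite (leq_trans Q_ge2) // -[X in (X <= _)%N]expn1 leq_pexp2l // ltnW ?Q_ge2.
have a_ge2 := pow_ge2 _ d_pos.
have b_ge2 : (2 <= Q ^ (n - d))%N by rewrite pow_ge2 ?subn_gt0.
move: UM_ge UM_le a_ge2 b_ge2; rewrite card_off Qn.
move: (Q ^ d)%N (Q ^ (n - d))%N #|UM| => a b x; nia.
Qed.
End TwoGoodSubspaces.

Section ProjectionAlongGood.
(* Projecting onto a good T along a complementary good T' maps U bijectively
   onto T: U meets T' trivially, and #|U| = Q^n = #|vecs T|. *)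
Variables T T' : 'M[K]_m.
Hypotheses (T_good : good_T Fq U S T) (T'_good : good_T Fq U S T')
  (T_T'_disjoint : (T :&: T')%MS = 0).

Lemma sum_full p (A : 'M[K]_(p, m)) : (A <= T + T')%MS.
Proof.
have [rT _ _] := T_good; have [rT' _ _] := T'_good.
apply: submx_trans (submx1 A) _; rewrite sub1mx /row_full.
by have := mxrank_sum_cap T T'; rewrite T_T'_disjoint mxrank0 addn0 rT rT' => ->.
Qed.

Lemma proj_decomposition (v : 'rV[K]_m) : v *m proj_mx T T' + v *m proj_mx T' T = v.
Proof. exact: add_proj_mx T_T'_disjoint (sum_full v). Qed.

Lemma proj_injective_on_U : {in U &, injective (mulmxr (proj_mx T T'))}.
Proof.
move=> u w uU wU /= eq_proj; apply/eqP; rewrite -subr_eq0; apply: contraTT isT => uw_nz.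
have [_ T'_disj _] := T'_good; have := T'_disj _ (UB uU wU) uw_nz.
by rewrite -(proj_decomposition (u - w)) mulmxBl eq_proj subrr add0r proj_mx_sub.
Qed.

Lemma proj_onto (x : 'rV[K]_m) : (x <= T)%MS -> exists2 u, u \in U & u *m proj_mx T T' = x.
Proof.
have [rT _ _] := T_good; move=> xT.
apply: (@inj_card_onto _ U (vecs T) (mulmxr (proj_mx T T'))).
- exact: proj_injective_on_U.
- by move=> u _; rewrite inE proj_mx_sub.
- by rewrite card_rowspace rT card_U.
- by rewrite inE.
Qed.
End ProjectionAlongGood.

Local Notation p1 v := (v *m proj_mx T1 T2).
Local Notation p2 v := (v *m proj_mx T2 T1).

Lemma T2_T1_disjoint : (T2 :&: T1)%MS = 0.
Proof. by rewrite capmxC T1_T2_disjoint. Qed.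

(* Since p1 is a bijection from U onto T1, U is the graph {x + g x | x in T1}
   of the map g = p2 \o (p1 restricted to U)^-1 from T1 to T2. *)
Definition graph_fun (x : 'rV[K]_m) : 'rV[K]_m := p2 (odflt 0 [pick u in U | p1 u == x]).

Lemma graph_fun_proj u : u \in U -> graph_fun (p1 u) = p2 u.
Proof.
move=> uU; rewrite /graph_fun; case: pickP => [w /andP[wU /eqP eq_p1]|none] /=.
  by rewrite (proj_injective_on_U T1_good T2_good T1_T2_disjoint wU uU eq_p1).
by move: (none u); rewrite uU eqxx.
Qed.

Lemma graph_fun_sub x : (graph_fun x <= T2)%MS.
Proof. exact: proj_mx_sub. Qed.

Lemma U_as_graph u : u \in U -> u = p1 u + graph_fun (p1 u).
Proof.
by move=> uU; rewrite graph_fun_proj // (proj_decomposition T1_good T2_good T1_T2_disjoint).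
Qed.

Lemma graph_in_U x : (x <= T1)%MS -> x + graph_fun x \in U.
Proof.
move=> xT1; have [u uU <-] := proj_onto T1_good T2_good T1_T2_disjoint xT1.
by rewrite -U_as_graph.
Qed.

Lemma proj1_graph x : (x <= T1)%MS -> p1 (x + graph_fun x) = x.
Proof.
move=> xT1; rewrite mulmxDl proj_mx_id ?proj_mx_0 ?graph_fun_sub ?addr0 //;
  exact: T1_T2_disjoint.
Qed.

Lemma proj2_graph x : (x <= T1)%MS -> p2 (x + graph_fun x) = graph_fun x.
Proof.
move=> xT1; rewrite mulmxDl proj_mx_0 ?proj_mx_id ?graph_fun_sub ?add0r //;
  exact: T2_T1_disjoint.
Qed.

Lemma graph_fun0 : graph_fun 0 = 0.
Proof. by have := graph_fun_proj U0; rewrite !mul0mx. Qed.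

Lemma graph_funD x y : (x <= T1)%MS -> (y <= T1)%MS ->
  graph_fun (x + y) = graph_fun x + graph_fun y.
Proof.
move=> xT1 yT1; have := graph_fun_proj (UD (graph_in_U xT1) (graph_in_U yT1)).
by rewrite !(mulmxDl (x + graph_fun x)) !proj1_graph ?proj2_graph.
Qed.

Lemma graph_funZ a x : a \in Fq -> (x <= T1)%MS -> graph_fun (a *: x) = a *: graph_fun x.
Proof.
move=> aF xT1; have := graph_fun_proj (UZ aF (graph_in_U xT1)).
by rewrite -!scalemxAl proj1_graph ?proj2_graph.
Qed.

Lemma graph_fun_inj x y : (x <= T1)%MS -> (y <= T1)%MS -> graph_fun x = graph_fun y -> x = y.
Proof.
move=> xT1 yT1 eq_g; rewrite -(proj1_graph xT1) -(proj1_graph yT1); congr (p1 _).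
apply: (proj_injective_on_U T2_good T1_good T2_T1_disjoint); rewrite ?graph_in_U //=.
by rewrite !proj2_graph.
Qed.

Lemma graph_fun_nz x : (x <= T1)%MS -> x != 0 -> graph_fun x != 0.
Proof.
move=> xT1; apply: contraNneq => gx0.
by apply/eqP/graph_fun_inj; rewrite ?sub0mx ?graph_fun0.
Qed.

Lemma graph_fun_onto v : (v <= T2)%MS -> exists2 x, (x <= T1)%MS & graph_fun x = v.
Proof.
move=> vT2; have [u uU <-] := proj_onto T2_good T1_good T2_T1_disjoint vT2.
by exists (p1 u); rewrite ?proj_mx_sub ?graph_fun_proj.
Qed.

Lemma line_split s : s \in S -> (s <= (s :&: T1) + (s :&: T2))%MS.
Proof.
move=> sS; have [_ rs] := S_lines sS.
have [v vsT1 v_nz] := nonzero_on_point T1_good sS.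
have [w wsT2 w_nz] := nonzero_on_point T2_good sS.
have v_w : ~~ (v <= w)%MS.
  apply: contra v_nz => vw; rewrite -submx0 -T1_T2_disjoint sub_capmx.
  rewrite (submx_trans vsT1) ?capmxSr //.
  by rewrite (submx_trans vw) // (submx_trans wsT2) ?capmxSr.
apply: submx_trans (addsmxS vsT1 wsT2).
apply: rank2_spanned rs _ _ w_nz v_w.
  exact: submx_trans vsT1 (capmxSl _ _).
exact: submx_trans wsT2 (capmxSl _ _).
Qed.

Lemma proj_on_line s (u : 'rV[K]_m) : s \in S -> (u <= s)%MS ->
  (p1 u <= s :&: T1)%MS /\ (p2 u <= s :&: T2)%MS.
Proof.
move=> sS /submx_trans /(_ (line_split sS)) /sub_addsmxP[[D1 D2] /= ->].
set a := D1 *m _; set b := D2 *m _.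
have a_sT1 : (a <= s :&: T1)%MS by apply: submxMl.
have b_sT2 : (b <= s :&: T2)%MS by apply: submxMl.
have aT1 : (a <= T1)%MS := submx_trans a_sT1 (capmxSr _ _).
have bT2 : (b <= T2)%MS := submx_trans b_sT2 (capmxSr _ _).
rewrite !mulmxDl (proj_mx_id T1_T2_disjoint aT1) (proj_mx_0 T1_T2_disjoint bT2).
by rewrite (proj_mx_0 T2_T1_disjoint aT1) (proj_mx_id T2_T1_disjoint bT2) addr0 add0r.
Qed.

Lemma line_through (x : 'rV[K]_m) : (x <= T1)%MS -> x != 0 ->
  exists2 s, s \in S & (x <= s :&: T1)%MS /\ (graph_fun x <= s :&: T2)%MS.
Proof.
move=> xT1 x_nz; have gU := graph_in_U xT1.
have [s sS us] : exists2 s, s \in S & ((x + graph_fun x)%R <= s)%MS.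
  apply: (U_covered gU); apply: contraNneq x_nz => x0.
  by rewrite -(proj1_graph xT1) x0 mul0mx.
by exists s => //; have := proj_on_line sS us; rewrite proj1_graph ?proj2_graph.
Qed.

Lemma proj_onto_line s (y : 'rV[K]_m) : s \in S -> (y <= s :&: T1)%MS ->
  exists2 w, w \in meetU U s & p1 w = y.
Proof.
move=> sS ysT1; apply: (@inj_card_onto _ (meetU U s) (vecs (s :&: T1)) (mulmxr (proj_mx T1 T2))).
- move=> u w; rewrite !inE => /andP[uU _] /andP[wU _].
  exact: (proj_injective_on_U T1_good T2_good T1_T2_disjoint).
- by move=> u; rewrite !inE => /andP[_ us]; case: (proj_on_line sS us).
- by rewrite card_point ?card_U_line.
- by rewrite inE.
Qed.

Lemma graph_fun_on_point (x : 'rV[K]_m) l : (x <= T1)%MS -> x != 0 ->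
  exists c, graph_fun (l *: x) = c *: graph_fun x.
Proof.
move=> xT1 x_nz; have [s sS [xsT1 gxsT2]] := line_through xT1 x_nz.
have [w] := proj_onto_line sS (scalemx_sub l xsT1).
rewrite inE => /andP[wU ws] <-; rewrite graph_fun_proj //.
apply: rank1_multiple (point_on_line T2_good sS) gxsT2 (graph_fun_nz xT1 x_nz) _.
by case: (proj_on_line sS ws).
Qed.

(* Conversely, g x' proportional to g x forces x' on the point <x>: otherwise
   g x' would lie on two distinct lines of S. *)
Lemma graph_fun_point_inj (x x' : 'rV[K]_m) c : (x <= T1)%MS -> x != 0 ->
  (x' <= T1)%MS -> x' != 0 -> graph_fun x' = c *: graph_fun x -> (x' <= x)%MS.
Proof.
move=> xT1 x_nz x'T1 x'_nz eq_g.
have [s sS [xs gxs]] := line_through xT1 x_nz.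
have [s' s'S [x's gx's]] := line_through x'T1 x'_nz.
have [eq_ss'|ss'] := eqVneq s s'.
  rewrite -eq_ss' in x's; have [d ->] := rank1_multiple (point_on_line T1_good sS) xs x_nz x's.
  exact: scalemx_sub.
case/negP: (graph_fun_nz x'T1 x'_nz); apply/eqP.
apply: (lines_meet_trivially s'S sS); first by rewrite eq_sym.
  exact: submx_trans gx's (capmxSl _ _).
by rewrite eq_g scalemx_sub // (submx_trans gxs) ?capmxSl.
Qed.

(* The factor by which g scales <l x> is the same for non-proportional x, y:
   compare the factors at x, y and x + y. *)
Lemma point_factor_indep (x y : 'rV[K]_m) l c c' : (x <= T1)%MS -> x != 0 ->
  (y <= T1)%MS -> y != 0 -> ~~ (y <= x)%MS ->
  graph_fun (l *: x) = c *: graph_fun x -> graph_fun (l *: y) = c' *: graph_fun y -> c = c'.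
Proof.
move=> xT1 x_nz yT1 y_nz y_x gx gy.
have xyT1 : ((x + y)%R <= T1)%MS by rewrite addmx_sub.
have xy_nz : x + y != 0.
  by apply: contraNneq y_x => /eqP; rewrite addr_eq0 => /eqP->; rewrite eqmx_opp.
have [e ge] := graph_fun_on_point l xyT1 xy_nz.
have eq_comb : (c' - e) *: graph_fun y = (e - c) *: graph_fun x.
  have sum_eq : c *: graph_fun x + c' *: graph_fun y = e *: graph_fun x + e *: graph_fun y.
    by rewrite -gx -gy -graph_funD ?scalemx_sub // -scalerDr ge graph_funD // scalerDr.
  by apply/eqP; rewrite !scalerBl subr_eq addrAC -sum_eq addrAC subrr add0r.
have [ce0|ce_nz] := eqVneq (c' - e) 0.
  have e_c : e = c.
    move: eq_comb; rewrite ce0 scale0r => /esym/eqP.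
    by rewrite scaler_eq0 (negbTE (graph_fun_nz xT1 x_nz)) orbF subr_eq0 => /eqP.
  by apply/eqP; rewrite -e_c eq_sym -subr_eq0 ce0.
case/negP: y_x; apply: (graph_fun_point_inj (c := (c' - e)^-1 * (e - c))) => //.
by rewrite -scalerA -eq_comb scalerA mulVf // scale1r.
Qed.

(* The factor is the same for all points: if y is proportional to x, compare
   both with a vector z of T1 outside <x>, which exists as \rank T1 = n >= 2. *)
Lemma point_factor_unique (x y : 'rV[K]_m) l c c' : (x <= T1)%MS -> x != 0 ->
  (y <= T1)%MS -> y != 0 ->
  graph_fun (l *: x) = c *: graph_fun x -> graph_fun (l *: y) = c' *: graph_fun y -> c = c'.
Proof.
move=> xT1 x_nz yT1 y_nz gx gy.
have [y_x|y_x] := boolP (y <= x)%MS; last exact: point_factor_indep gx gy.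
have [rT1 _ _] := T1_good.
have T1_x : ~~ (T1 <= x)%MS.
  by apply/negP=> /mxrankS; rewrite rT1 rank_rV x_nz leqNgt n_ge2.
have [i z_x] := row_subPn T1_x; set z := row i T1 in z_x.
have zT1 : (z <= T1)%MS by apply: row_sub.
have z_nz : z != 0 by apply: contraNneq z_x => ->; rewrite sub0mx.
have [cz gz] := graph_fun_on_point l zT1 z_nz.
have z_y : ~~ (z <= y)%MS by apply: contra z_x => /submx_trans; apply.
rewrite (point_factor_indep xT1 x_nz zT1 z_nz z_x gx gz).
by rewrite (point_factor_indep yT1 y_nz zT1 z_nz z_y gy gz).
Qed.

Section CompanionAutomorphism.
(* Reading off the common factor at a fixed nonzero x0 of T1 defines sigma,
   with g (l x) = sigma l g x for all x in T1. *)
Variable x0 : 'rV[K]_m.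
Hypotheses (x0T1 : (x0 <= T1)%MS) (x0_nz : x0 != 0).

Definition sigma (l : K) : K := odflt 0 [pick c | graph_fun (l *: x0) == c *: graph_fun x0].

Lemma sigma_at_x0 l : graph_fun (l *: x0) = sigma l *: graph_fun x0.
Proof.
rewrite /sigma; case: pickP => [c /eqP //|none].
by have [c gc] := graph_fun_on_point l x0T1 x0_nz; move: (none c); rewrite gc eqxx.
Qed.

Lemma graph_fun_semilinear x l : (x <= T1)%MS -> graph_fun (l *: x) = sigma l *: graph_fun x.
Proof.
move=> xT1; have [->|x_nz] := eqVneq x 0; first by rewrite scaler0 graph_fun0 scaler0.
have [c gc] := graph_fun_on_point l xT1 x_nz.
by rewrite gc (point_factor_unique xT1 x_nz x0T1 x0_nz gc (sigma_at_x0 l)).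
Qed.

Lemma scale_gx0_inj (a b : K) : a *: graph_fun x0 = b *: graph_fun x0 -> a = b.
Proof.
move/eqP; rewrite -subr_eq0 -scalerBl scaler_eq0 (negbTE (graph_fun_nz x0T1 x0_nz)) orbF.
by rewrite subr_eq0 => /eqP.
Qed.

(* sigma is a ring morphism, read off on the nonzero vector g x0. *)
Lemma sigmaD a b : sigma (a + b) = sigma a + sigma b.
Proof.
apply: scale_gx0_inj; rewrite -sigma_at_x0 scalerDl graph_funD ?scalemx_sub //.
by rewrite !sigma_at_x0 scalerDl.
Qed.

Lemma sigmaM a b : sigma (a * b) = sigma a * sigma b.
Proof.
apply: scale_gx0_inj; rewrite -sigma_at_x0 -scalerA graph_fun_semilinear ?scalemx_sub //.
by rewrite sigma_at_x0 scalerA.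
Qed.

Lemma sigma1 : sigma 1 = 1.
Proof. by apply: scale_gx0_inj; rewrite -sigma_at_x0 !scale1r. Qed.

(* Fix(sigma) = Fq: g is F_q-linear; conversely if sigma x = x then x u lies
   in U for u = x0 + g x0, and the point <u> has weight 1 since U is
   scattered, so x u = b u with b in F_q. *)
Lemma sigma_fixed x : sigma x = x <-> x \in Fq.
Proof.
split => [sx|xF]; last by apply: scale_gx0_inj; rewrite -sigma_at_x0 graph_funZ.
set u := x0 + graph_fun x0.
have uU : u \in U by apply: graph_in_U.
have u_nz : u != 0 by apply: contraNneq x0_nz => u0; rewrite -(proj1_graph x0T1) -/u u0 mul0mx.
have xuU : x *: u \in U.
  by rewrite /u scalerDr -{2}sx -graph_fun_semilinear // graph_in_U ?scalemx_sub.
have [vs [_ span]] := U_scattered uU u_nz.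
have : u \in meetU U <<u>>%MS by rewrite inE uU genmxE submx_refl.
move/span => [a [aF]]; rewrite big_ord1 => ua.
have : x *: u \in meetU U <<u>>%MS by rewrite inE xuU genmxE scalemx_sub.
move/span => [b [bF]]; rewrite big_ord1 ua scalerA => /eqP.
have vs_nz : vs ord0 != 0 by apply: contraNneq u_nz => v0; rewrite ua v0 scaler0.
rewrite -subr_eq0 -scalerBl scaler_eq0 (negbTE vs_nz) orbF subr_eq0 => /eqP xab.
have a_nz : a ord0 != 0 by apply: contraNneq u_nz => a0; rewrite ua a0 scale0r.
have [_ _ _ FqM FqV] := Fq_subfield.
by rewrite -(mulfK a_nz x) xab FqM ?FqV.
Qed.
End CompanionAutomorphism.

Lemma linset_as_graph :
  linset U = [set <<x + 1 *: graph_fun x>>%MS | x in [set x | (x <= T1)%MS && (x != 0)]].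
Proof.
apply/setP=> P; apply/imsetP/imsetP => [[u]|[x]].
  rewrite !inE => /andP[u_nz uU] ->; exists (p1 u); last by rewrite scale1r -U_as_graph.
  rewrite inE proj_mx_sub /=; apply: contraNneq u_nz => p1u0.
  by rewrite (U_as_graph uU) p1u0 graph_fun0 addr0.
rewrite inE scale1r => /andP[xT1 x_nz] ->; exists (x + graph_fun x) => //.
rewrite !inE graph_in_U // andbT; apply: contraNneq x_nz => x0.
by rewrite -(proj1_graph xT1) x0 mul0mx.
Qed.

(* The conclusion, with U1 = T1, U2 = T2, f = g and rho = 1. *)
Lemma pseudoregulus_graph_form :
  exists (U1 U2 : 'M[K]_(n + n)) (sigma : {rmorphism K -> K})
         (f : 'rV[K]_(n + n) -> 'rV[K]_(n + n)) (rho : K),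
    [/\ \rank U1 = n, \rank U2 = n, (U1 + U2 == 1%:M)%MS
      & (U1 :&: U2 == (0 : 'M[K]_(n + n)))%MS] /\
    [/\ (forall u, (u <= U1)%MS -> (f u <= U2)%MS),
        (forall u w, (u <= U1)%MS -> (w <= U1)%MS -> f (u + w) = f u + f w)
      & (forall (l : K) u, (u <= U1)%MS -> f (l *: u) = sigma l *: f u)] /\
    (forall u w, (u <= U1)%MS -> (w <= U1)%MS -> f u = f w -> u = w) /\
    (forall v, (v <= U2)%MS -> exists2 u, (u <= U1)%MS & f u = v) /\
    (forall x : K, sigma x = x <-> x \in Fq) /\
    rho != 0 /\
    linset U = [set <<u + rho *: f u>>%MS | u in [set u | (u <= U1)%MS && (u != 0)]].
Proof.
have [rT1 _ _] := T1_good; have [rT2 _ _] := T2_good.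
have [x0] : exists2 x0, x0 \in vecs T1 & x0 != 0.
  apply: exists_nonzero; rewrite card_rowspace rT1 (leq_trans Q_ge2) //.
  by rewrite -[X in (X <= _)%N]expn1 leq_pexp2l ?(ltnW Q_ge2) ?(ltnW n_ge2).
rewrite inE => x0T1 x0_nz.
exists T1, T2, (rmorph_of (sigmaD x0T1 x0_nz) (sigmaM x0T1 x0_nz) (sigma1 x0T1 x0_nz)).
exists graph_fun, 1; split.
  split=> //; first by rewrite submx1 (sum_full T1_good T2_good T1_T2_disjoint).
  by rewrite T1_T2_disjoint !sub0mx.
split.
  by split=> [u _|u w|l u]; [exact: graph_fun_sub|exact: graph_funD|exact: graph_fun_semilinear].
split; first exact: graph_fun_inj.
split; first exact: graph_fun_onto.
split; first exact: (sigma_fixed x0T1 x0_nz).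
by rewrite oner_neq0 linset_as_graph.
Qed.
End PseudoregulusType.

Unset Implicit Arguments.

Theorem theorem3p12 (K : finFieldType) (Fq : {pred K}) (n t : nat)
  (HFq : is_subfield Fq) (Hn : (2 <= n)%N) (Ht : (2 <= t)%N)
  (HK : #|K| = (#|Fq| ^ t)%N)
  (U : {set 'rV[K]_(n + n)}) (HU : pseudoregulus_type K Fq n t U) :
  exists (U1 U2 : 'M[K]_(n + n)) (sigma : {rmorphism K -> K})
         (f : 'rV[K]_(n + n) -> 'rV[K]_(n + n)) (rho : K),
    (* V = U1 (+) U2, dim U1 = dim U2 = n *)
    [/\ \rank U1 = n, \rank U2 = n, (U1 + U2 == 1%:M)%MS
      & (U1 :&: U2 == (0 : 'M[K]_(n + n)))%MS] /\
    (* f : U1 -> U2 is semilinear with companion automorphism sigma *)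
    [/\ (forall u, (u <= U1)%MS -> (f u <= U2)%MS),
        (forall u w, (u <= U1)%MS -> (w <= U1)%MS -> f (u + w) = f u + f w)
      & (forall (l : K) u, (u <= U1)%MS -> f (l *: u) = sigma l *: f u)] /\
    (* f is invertible (a bijection U1 -> U2) *)
    (forall u w, (u <= U1)%MS -> (w <= U1)%MS -> f u = f w -> u = w) /\
    (forall v, (v <= U2)%MS -> exists2 u, (u <= U1)%MS & f u = v) /\
    (* Fix(sigma) = F_q *)
    (forall x : K, sigma x = x <-> x \in Fq) /\
    rho != 0 /\
    linset U = [set <<u + rho *: f u>>%MS | u in [set u | (u <= U1)%MS && (u != 0)]].
Proof.
case: HU => _ U_subspace U_dim U_scattered
  [S [card_S S_lines S_weight S_disjoint [T1 [T2 [T1_good T2_good T1_neq_T2 _]]]]].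
exact: (pseudoregulus_graph_form HFq Hn HK U_subspace U_dim U_scattered card_S
  S_lines S_weight S_disjoint T1_good T2_good T1_neq_T2).
Qed.
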